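(* Let $f_\infty:(0,\infty)\to\mathbb{R}$ be defined by $f_\infty(x)=(x^2-1)^2+\frac{(x^2+1)^2}{x}(x^2-1)\left(\arctan(x)-\frac{\pi}{2}\right)$. Then $f_\infty(x)=0$ only for $x=1$, $f_\infty(x)>0$ for $x\in(0,1)$, and $f_\infty(x)<0$ for all $x>1$. *)

From Stdlib Require Import Reals.
Open Scope R_scope.

Definition f_inf (x : R) : R :=
  (x ^ 2 - 1) ^ 2 + (x ^ 2 + 1) ^ 2 / x * (x ^ 2 - 1) * (atan x - PI / 2).

(* Since atan x - PI/2 = - atan (1/x), f_inf x factors as (x^2 - 1) * c x with
   c x = (x^2 - 1) - (x^2 + 1)^2 / x * atan (1/x).  The bound atan t > t / (1 + t^2),
   which is sin (2 atan t) < 2 atan t, gives c x < (x^2 - 1) - (x^2 + 1) = -2, so f_inf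
   has the sign opposite to x^2 - 1. *)

From Stdlib Require Import Reals Lra Psatz.
Open Scope R_scope.

Lemma atan_gt0 (t : R) : 0 < t -> 0 < atan t.
Proof. intros Ht. rewrite <- atan_0. now apply atan_increasing. Qed.

Lemma sin_2atan (t : R) : sin (2 * atan t) = 2 * t / (1 + t ^ 2).
Proof.
  assert (Hsq : sqrt (1 + t²) * sqrt (1 + t²) = 1 + t ^ 2).
  { rewrite sqrt_sqrt; [unfold Rsqr; ring | pose proof (Rle_0_sqr t); lra]. }
  assert (Hpos : 0 < sqrt (1 + t²)).
  { apply sqrt_lt_R0. pose proof (Rle_0_sqr t). lra. }
  rewrite sin_2a, sin_atan, cos_atan, <- Hsq. field. lra.
Qed.

Lemma atan_gt_div (t : R) : 0 < t -> t / (1 + t ^ 2) < atan t.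
Proof.
  intros Ht.
  pose proof (sin_lt_x (2 * atan t)) as Hsin.
  rewrite sin_2atan in Hsin.
  assert (2 * t / (1 + t ^ 2) < 2 * atan t) by (apply Hsin; pose proof (atan_gt0 t Ht); lra).
  unfold Rdiv in *. lra.
Qed.

Definition f_inf_cofactor (x : R) : R :=
  (x ^ 2 - 1) - (x ^ 2 + 1) ^ 2 / x * atan (/ x).

Lemma f_inf_factor (x : R) : 0 < x -> f_inf x = (x ^ 2 - 1) * f_inf_cofactor x.
Proof.
  intros Hx. unfold f_inf, f_inf_cofactor. rewrite atan_inv by exact Hx. field. lra.
Qed.

Lemma f_inf_cofactor_lt (x : R) : 0 < x -> f_inf_cofactor x < -2.
Proof.
  intros Hx. unfold f_inf_cofactor.
  pose proof (atan_gt_div (/ x) (Rinv_0_lt_compat _ Hx)) as Hatan.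
  replace (/ x / (1 + (/ x) ^ 2)) with (x / (x ^ 2 + 1)) in Hatan by (field; nra).
  assert (Hcoef : 0 < (x ^ 2 + 1) ^ 2 / x) by (apply Rdiv_lt_0_compat; nra).
  assert (Hprod : (x ^ 2 + 1) ^ 2 / x * (x / (x ^ 2 + 1)) = x ^ 2 + 1) by (field; nra).
  pose proof (Rmult_lt_compat_l _ _ _ Hcoef Hatan).
  lra.
Qed.

Theorem lemma3p3 :
  (forall x : R, 0 < x -> (f_inf x = 0 <-> x = 1)) /\
  (forall x : R, 0 < x < 1 -> f_inf x > 0) /\
  (forall x : R, 1 < x -> f_inf x < 0).
Proof.
  split; [|split].
  - intros x Hx. rewrite f_inf_factor by exact Hx.
    pose proof (f_inf_cofactor_lt x Hx). split.
    + intros Hzero. apply Rmult_integral in Hzero as [Hsq | Hc]; [|lra].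
      assert (Hfac : (x - 1) * (x + 1) = 0) by (rewrite <- Hsq; ring).
      apply Rmult_integral in Hfac as [|]; lra.
    + intros ->. ring.
  - intros x [Hx Hx1]. rewrite f_inf_factor by exact Hx.
    pose proof (f_inf_cofactor_lt x Hx).
    assert (x ^ 2 - 1 < 0) by nra. nra.
  - intros x Hx1. rewrite f_inf_factor by lra.
    pose proof (f_inf_cofactor_lt x ltac:(lra)).
    assert (0 < x ^ 2 - 1) by nra. nra.
Qed.
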